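(* (Ratio Test for Series with Unit Coefficients.) Let $\mathcal{A}$ be a finite-dimensional real associative commutative unital algebra with norm $\|\cdot\|$ and constant $m_{\mathcal{A}}>0$ such that $\|x\star y\|\le m_{\mathcal{A}}\|x\|\|y\|$ for all $x,y$. Consider a power series $\sum c_n\star(z-z_0)^n$ with $z_0\in\mathcal{A}$ and $c_n\in\mathcal{A}^\times$ for all $n$. Let $\alpha=\limsup_{n\to\infty}\left\|\frac{c_{n+1}}{c_n}\right\|$ and $R=\frac{1}{m_{\mathcal{A}}^2\alpha}$. Then $\sum c_n\star(z-z_0)^n$ is absolutely convergent for all $z$ with $z-z_0\in\mathcal{A}^\times$ and $\|z-z_0\|<R$. Moreover, if $\alpha=0$ then $\sum c_n\star(z-z_0)^n$ converges absolutely on all of $\mathcal{A}$.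
   Context: $\mathcal{A}^\times$ is the group of units of $\mathcal{A}$; $\frac{a}{b}=a\star b^{-1}$ for $b\in\mathcal{A}^\times$. Absolute convergence of $\sum a_n$ means convergence of $\sum\|a_n\|$. Convention $R=\infty$ when $\alpha=0$. *)

From HB Require Import structures.
From mathcomp Require Import all_boot all_order all_algebra all_field.
From mathcomp Require Import all_classical all_reals all_analysis.
Set Implicit Arguments. Unset Strict Implicit. Unset Printing Implicit Defensive.
Import Order.TTheory GRing.Theory Num.Theory numFieldNormedType.Exports.
Local Open Scope ring_scope.

Definition is_norm (R : realType) (A : lmodType R) (nrm : A -> R) : Prop :=
  [/\ forall x, 0 <= nrm x,
      forall x, nrm x = 0 -> x = 0,
      forall (a : R) x, nrm (a *: x) = `|a| * nrm x &
      forall x y, nrm (x + y) <= nrm x + nrm y].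

Definition ratio_limsup (R : realType) (A : falgType R) (nrm : A -> R)
  (c : nat -> A) : \bar R :=
  limn_esup (fun n => (nrm (c n.+1 / c n))%:E).

Definition ratio_radius (R : realType) (m : R) (alpha : \bar R) : \bar R :=
  match alpha with
  | EFin a => if a == 0 then +oo%E else ((m ^+ 2 * a)^-1)%:E
  | +oo%E => 0%E
  | -oo%E => +oo%E
  end.

Definition abs_convergent (R : realType) (A : Type) (nrm : A -> R)
  (a : nat -> A) : Prop :=
  cvgn (series (fun n => nrm (a n))).

From HB Require Import structures.
From mathcomp Require Import all_boot all_order all_algebra all_field.
From mathcomp Require Import all_classical all_reals all_analysis.
From mathcomp Require Import ring.
Set Implicit Arguments.
Unset Strict Implicit.
Unset Printing Implicit Defensive.

Import Order.TTheory GRing.Theory Num.Theory numFieldNormedType.Exports.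
Local Open Scope classical_set_scope.
Local Open Scope ring_scope.

(* Put a_n = c_n w^n.  Since a_(n+1) = (c_(n+1) / c_n) a_n w, submultiplicativity
   gives |a_(n+1)| <= m^2 |c_(n+1) / c_n| |w| |a_n|.  If |w| < R, choose b > alpha
   with m^2 b |w| < 1; eventually |c_(n+1) / c_n| < b, so the norms |a_n| are
   eventually dominated by a geometric sequence of ratio m^2 b |w| < 1. *)

Lemma limn_esup_lt_near (R : realType) (u : (\bar R)^nat) (b : \bar R) :
  (limn_esup u < b)%E -> \forall n \near \oo, (u n < b)%E.
Proof.
rewrite /limn_esup /limf_esup => /ereal_inf_lt[_ [V Voo <-]] supV_lt_b.
apply: filterS Voo => n Vn; apply: le_lt_trans supV_lt_b.
by apply: ereal_sup_ubound; exists n.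
Qed.

Lemma is_cvg_series_ratio (R : realType) (u : R ^nat) (q : R) :
  (forall n, 0 <= u n) -> 0 <= q -> q < 1 ->
  (\forall n \near \oo, u n.+1 <= q * u n) -> cvgn (series u).
Proof.
move=> u_ge0 q_ge0 q_lt1 [N _ uq].
have geo k : u (k + N)%N <= u N * q ^+ k.
  elim: k => [|k IHk]; first by rewrite add0n expr0 mulr1.
  rewrite addSn (le_trans (uq _ (leq_addl _ _))) // exprS mulrCA ler_wpM2l //.
have : cvgn (series (fun k => u (k + N)%N)).
  apply: (series_le_cvg _ _ geo) => // [k|]; first by rewrite mulr_ge0 ?exprn_ge0.
  by apply: is_cvg_geometric_series; rewrite ger0_norm.
move=> /cvg_ex[l shifted_l]; rewrite -(is_cvg_series_restrict N).
apply/cvg_ex; exists l; rewrite -(cvg_shiftn N) /=.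
suff -> : (fun n => \sum_(N <= k < n + N) u k) = series (fun k => u (k + N)%N).
  exact: shifted_l.
by apply/funext => n; rewrite seriesEnat -{1}(add0n N) big_addn addnK.
Qed.

Lemma exists_gt_mul_lt1 (R : realFieldType) (k a : R) :
  0 <= k -> k * a < 1 -> exists2 b, a < b & k * b < 1.
Proof.
move=> k_ge0 ka_lt1; have k1_gt0 : 0 < k + 1 := ltr_wpDl k_ge0 ltr01.
exists (a + (1 - k * a) / (k + 1)); first by rewrite ltrDl divr_gt0 ?subr_gt0.
have lt_k : k / (k + 1) < 1 by rewrite ltr_pdivrMr // mul1r ltrDl.
rewrite mulrDr mulrCA -[X in _ < X](subrK (k * a)) addrC ltrD2r.
by rewrite gtr_pMr // subr_gt0.
Qed.

Lemma ratio_radius0 (R : realType) (m : R) : ratio_radius m 0%E = +oo%E.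
Proof. by rewrite /ratio_radius /= eqxx. Qed.

Lemma lt_ratio_radius (R : realType) (m r : R) (alpha : \bar R) :
  0 <= r -> (r%:E < ratio_radius m alpha)%E ->
  exists2 b : R, (alpha < b%:E)%E & m ^+ 2 * b * r < 1.
Proof.
move=> r_ge0; have mr_ge0 : 0 <= m ^+ 2 * r by rewrite mulr_ge0 ?sqr_ge0.
have above a : m ^+ 2 * r * a < 1 -> exists2 b, a < b & m ^+ 2 * b * r < 1.
  by move=> /(exists_gt_mul_lt1 mr_ge0)[b ab mb]; exists b; rewrite // mulrAC.
have [b b_gt0 mb] : exists2 b, 0 < b & m ^+ 2 * b * r < 1.
  by apply: above; rewrite mulr0 ltr01.
rewrite /ratio_radius; case: alpha => [a| |].
- case: eqP => [-> _|_]; first by exists b; rewrite ?lte_fin.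
  rewrite lte_fin => r_lt.
  have ma_gt0 : 0 < m ^+ 2 * a by rewrite -invr_gt0 (le_lt_trans r_ge0 r_lt).
  have [|b' ab' mb'] := above a; last by exists b'; rewrite ?lte_fin.
  by rewrite mulrAC -(mulfV (lt0r_neq0 ma_gt0)) ltr_pM2l.
- by rewrite lte_fin ltNge r_ge0.
- by exists b; rewrite ?ltNyr.
Qed.

Section RatioTestAlgebra.
Variables (R : realType) (A : unitRingType) (nrm : A -> R) (m : R).
Hypotheses (nrm_ge0 : forall x, 0 <= nrm x) (m_ge0 : 0 <= m)
  (nrm_mul : forall x y, nrm (x * y) <= m * nrm x * nrm y).

Lemma nrm_coef_exprS (c : nat -> A) (w : A) n : c n \is a GRing.unit ->
  nrm (c n.+1 * w ^+ n.+1)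
    <= m ^+ 2 * nrm (c n.+1 / c n) * nrm w * nrm (c n * w ^+ n).
Proof.
move=> cn_unit.
have -> : c n.+1 * w ^+ n.+1 = c n.+1 / c n * (c n * w ^+ n * w).
  by rewrite exprSr -{1}(divrK cn_unit (c n.+1)) !mulrA.
apply: le_trans (nrm_mul _ _) _.
set r := nrm (c n.+1 / c n); set a := nrm (c n * w ^+ n).
have -> : m ^+ 2 * r * nrm w * a = m * r * (m * a * nrm w) by ring.
by rewrite ler_wpM2l ?mulr_ge0 //; exact: nrm_ge0.
Qed.

Lemma abs_convergent_ratio (c : nat -> A) (w : A) (b : R) :
  (forall n, c n \is a GRing.unit) ->
  (limn_esup (fun n => (nrm (c n.+1 / c n))%:E) < b%:E)%E ->
  m ^+ 2 * b * nrm w < 1 ->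
  abs_convergent nrm (fun n => c n * w ^+ n).
Proof.
move=> c_unit /limn_esup_lt_near ratio_lt_b q_lt1.
have {}ratio_lt_b : \forall n \near \oo, nrm (c n.+1 / c n) < b.
  by apply: filterS ratio_lt_b => n; rewrite lte_fin.
have [n0 /(le_lt_trans (nrm_ge0 _)) b_gt0] := filter_ex ratio_lt_b.
apply: (is_cvg_series_ratio _ _ q_lt1) => //.
  by rewrite !mulr_ge0 ?sqr_ge0 // ltW.
apply: filterS ratio_lt_b => n ratio_lt_b.
apply: le_trans (nrm_coef_exprS w (c_unit n)) _.
by rewrite !ler_wpM2r // ler_wpM2l ?sqr_ge0 // ltW.
Qed.

End RatioTestAlgebra.

Theorem theorem5p9 (R : realType) (A : falgType R) (nrm : A -> R) (mA : R)
  (hcomm : forall x y : A, x * y = y * x)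
  (hnorm : is_norm nrm) (hm : 0 < mA)
  (hmul : forall x y : A, nrm (x * y) <= mA * nrm x * nrm y)
  (c : nat -> A) (z0 : A)
  (hc : forall n, c n \is a GRing.unit) :
  (forall z : A, z - z0 \is a GRing.unit ->
     ((nrm (z - z0))%:E < ratio_radius mA (ratio_limsup nrm c))%E ->
     abs_convergent nrm (fun n => c n * (z - z0) ^+ n))
  /\
  (ratio_limsup nrm c = 0%E ->
     forall z : A, abs_convergent nrm (fun n => c n * (z - z0) ^+ n)).
Proof.
have [nrm_ge0 _ _ _] := hnorm.
have conv w : ((nrm w)%:E < ratio_radius mA (ratio_limsup nrm c))%E ->
    abs_convergent nrm (fun n => c n * w ^+ n).
  move=> /(lt_ratio_radius (nrm_ge0 w))[b alpha_lt_b q_lt1].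
  exact: abs_convergent_ratio nrm_ge0 (ltW hm) hmul c w b hc alpha_lt_b q_lt1.
split=> [z _|alpha0 z]; apply: conv => //.
by rewrite alpha0 ratio_radius0 ltry.
Qed.
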